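(* Let $S_X,S_Y$ be finite nonempty action sets and $\varphi:S_X\times S_Y\to\mathbb{R}$. Suppose $\sigma_X:\mathcal{H}\to\Delta(S_X)$ is a $(\varphi,1)$-autocratic behavioral strategy for $X$ of arbitrary memory. Then there exists a two-point reactive learning strategy for $X$ that is also $(\varphi,1)$-autocratic.
   Context: Two players $X,Y$ play a repeated game with finite action sets $S_X,S_Y$; $\Delta(S)$ denotes the probability distributions on $S$. $\varphi$ is extended to mixed actions in its first argument by $\varphi(\tau_X,s_Y)=\mathbb{E}_{s_X\sim\tau_X}[\varphi(s_X,s_Y)]$. Histories: $\mathcal{H}=\bigcup_{T\ge0}(S_X\times S_Y)^T$. A behavioral strategy for $X$ is a map $\sigma_X:\mathcal{H}\to\Delta(S_X)$, similarly for $Y$; in each round $t$ players independently draw actions from their strategies evaluated at the history of realized action pairs of rounds $0,\dots,t-1$, and $\mathbb{E}_{\sigma_X,\sigma_Y}$ is the expectation over the resulting play. $\sigma_X$ is $(\varphi,1)$-autocratic if for every behavioral strategy $\sigma_Y$ of $Y$ the Cesàro limit $\lim_{T\to\infty}\frac{1}{T+1}\sum_{t=0}^T\mathbb{E}_{\sigma_X,\sigma_Y}[\varphi(s_X^t,s_Y^t)]$ exists and equals $0$. A reactive learning strategy for $X$ is a pair $(\sigma_X^0,\sigma_X^* )$ with $\sigma_X^0\in\Delta(S_X)$ and $\sigma_X^*:\Delta(S_X)\times S_Y\to\Delta(S_X)$, played by using $\tau_X^0=\sigma_X^0$ in round $0$ and $\tau_X^{t+1}=\sigma_X^*[\tau_X^t,s_Y^t]$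 in round $t+1$, where $s_Y^t$ is $Y$'s realized action in round $t$. It is two-point if there exist $\tau_X^\pm\in\Delta(S_X)$, $p_0\in[0,1]$, $p^*:[0,1]\times S_Y\to[0,1]$ with $\sigma_X^0=p_0\tau_X^++(1-p_0)\tau_X^-$ and $\sigma_X^*[p\tau_X^++(1-p)\tau_X^-,s_Y]=p^*[p,s_Y]\tau_X^++(1-p^*[p,s_Y])\tau_X^-$ for all $p\in[0,1]$, $s_Y\in S_Y$. *)

From HB Require Import structures.
From mathcomp Require Import all_boot all_order all_algebra.
From mathcomp Require Import all_classical all_reals all_analysis.
Set Implicit Arguments. Unset Strict Implicit. Unset Printing Implicit Defensive.
Import Order.TTheory GRing.Theory Num.Theory.
Import numFieldNormedType.Exports.
Local Open Scope classical_set_scope.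
Local Open Scope ring_scope.

Definition is_dist (R : realType) (S : finType) (f : {ffun S -> R}) : bool :=
  [forall s, 0 <= f s] && (\sum_(s : S) f s == 1).
Definition dist (R : realType) (S : finType) := {f : {ffun S -> R} | is_dist f}.

(* Histories: chronological sequences of realized action pairs
   (s_X^0,s_Y^0), ..., (s_X^{T-1},s_Y^{T-1}). *)
Definition history (SX SY : finType) := seq (SX * SY).

Definition stratX (R : realType) (SX SY : finType) := history SX SY -> dist R SX.
Definition stratY (R : realType) (SX SY : finType) := history SX SY -> dist R SY.

Fixpoint prob_from (R : realType) (SX SY : finType)
    (sX : stratX R SX SY) (sY : stratY R SX SY)
    (pre : history SX SY) (h : history SX SY) : R :=
  match h with
  | [::] => 1
  | p :: h' => val (sX pre) p.1 * val (sY pre) p.2 *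
               prob_from sX sY (rcons pre p) h'
  end.

Definition hist_prob (R : realType) (SX SY : finType)
    (sX : stratX R SX SY) (sY : stratY R SX SY) (h : history SX SY) : R :=
  prob_from sX sY [::] h.

Definition exp_payoff (R : realType) (SX SY : finType) (phi : SX -> SY -> R)
    (sX : stratX R SX SY) (sY : stratY R SX SY) (t : nat) : R :=
  \sum_(h : (t.+1).-tuple (SX * SY))
     hist_prob sX sY (tval h) * phi (tnth h ord_max).1 (tnth h ord_max).2.

Definition autocratic (R : realType) (SX SY : finType) (phi : SX -> SY -> R)
    (sX : stratX R SX SY) : Prop :=
  forall sY : stratY R SX SY,
    (fun T : nat => (T.+1)%:R^-1 * \sum_(t < T.+1) exp_payoff phi sX sY t)
      @ \oo --> (0 : R).

Definition reactive (R : realType) (SX SY : finType)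
    (sigma0 : dist R SX) (sigmastar : dist R SX -> SY -> dist R SX)
    : stratX R SX SY :=
  fun h => foldl (fun tau p => sigmastar tau p.2) sigma0 h.

Definition mix (R : realType) (S : finType) (p : R) (tp tm : dist R S)
    : {ffun S -> R} :=
  [ffun s => p * val tp s + (1 - p) * val tm s].

Definition two_point (R : realType) (SX SY : finType)
    (sigma0 : dist R SX) (sigmastar : dist R SX -> SY -> dist R SX) : Prop :=
  exists (tp tm : dist R SX) (p0 : R) (pstar : R -> SY -> R),
    [/\ 0 <= p0 <= 1,
        (forall p y, 0 <= p <= 1 -> 0 <= pstar p y <= 1),
        val sigma0 = mix p0 tp tm &
        forall p y (tau : dist R SX), 0 <= p <= 1 -> val tau = mix p tp tm ->
          val (sigmastar tau y) = mix (pstar p y) tp tm].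

(* If [sX] is autocratic, some mixed action [tp] satisfies [phi(tp, y) >= 0]
   for every [y]: otherwise, by compactness of the simplex, there is [c > 0]
   such that Y can answer every mixed action with a [y] of payoff at most
   [-c], and answering so drives the Cesaro means below [-c].  Applied to
   [-phi], the same argument gives [tm] with [phi(tm, y) <= 0].  The
   two-point learner puts weight [p] on [tp], [1 - p] on [tm], and replaces
   [p] by [p - phi(tau, y) / M] with [M] a bound on [|phi|]; the weight stays
   in [[0, 1]], and the expected payoff of each round is [M] times the
   expected decrease of the weight, so the cumulated payoff telescopes to at
   most [M] in absolute value. *)

From HB Require Import structures.
From mathcomp Require Import all_boot all_order all_algebra.
From mathcomp Require Import all_classical all_reals all_analysis.
From mathcomp Require Import ring lra.
Set Implicit Arguments. Unset Strict Implicit. Unset Printing Implicit Defensive.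
Import Order.TTheory GRing.Theory Num.Theory.
Import numFieldNormedType.Exports.
Local Open Scope classical_set_scope.
Local Open Scope ring_scope.

Section Simplex.
Variables (R : realType) (S : finType).
Implicit Types (t tp tm : dist R S).

Lemma dist_ge0 t s : 0 <= val t s.
Proof. by case: t => f /= /andP[/forallP]. Qed.

Lemma dist_sum1 t : \sum_s val t s = 1.
Proof. by case: t => f /= /andP[_ /eqP]. Qed.

Lemma dist_le1 t s : val t s <= 1.
Proof.
rewrite -(dist_sum1 t) (bigD1 s) //= lerDl.
by apply: sumr_ge0 => *; exact: dist_ge0.
Qed.

Lemma mix_is_dist tp tm p : 0 <= p <= 1 -> is_dist (mix p tp tm).
Proof.
move=> /andP[p0 p1]; apply/andP; split.
  apply/forallP => s; rewrite ffunE.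
  by rewrite addr_ge0 // mulr_ge0 ?dist_ge0 ?subr_ge0.
under eq_bigr do rewrite ffunE.
by rewrite big_split /= -!mulr_sumr !dist_sum1 !mulr1 addrC subrK.
Qed.

Lemma point_is_dist (s0 : S) : is_dist [ffun s => (s == s0)%:R : R].
Proof.
apply/andP; split; first by apply/forallP => s; rewrite ffunE ler0n.
rewrite (bigD1 s0) //= big1 => [|s /negbTE ss0]; last by rewrite ffunE ss0.
by rewrite ffunE eqxx addr0.
Qed.

Definition point_dist (s0 : S) : dist R S :=
  exist (fun f => is_dist f) _ (point_is_dist s0).

End Simplex.

Section Payoff.
Variables (R : realType) (SX SY : finType) (phi : SX -> SY -> R).

Definition payoff (f : {ffun SX -> R}) (y : SY) : R := \sum_x f x * phi x y.

Lemma payoff_mix p (tp tm : dist R SX) y :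
  payoff (mix p tp tm) y = p * payoff (val tp) y + (1 - p) * payoff (val tm) y.
Proof.
rewrite /payoff !mulr_sumr -big_split; apply: eq_bigr => x _ /=.
by rewrite ffunE; ring.
Qed.

Definition payoff_bound : R := 1 + \sum_x \sum_y `|phi x y|.

Lemma payoff_bound_gt0 : 0 < payoff_bound.
Proof. by rewrite ltr_wpDr // !sumr_ge0 // => x _; rewrite sumr_ge0. Qed.

Lemma norm_payoff_le (t : dist R SX) y : `|payoff (val t) y| <= payoff_bound.
Proof.
rewrite (le_trans (ler_norm_sum _ _ _)) // /payoff_bound ler_wpDl //.
apply: ler_sum => x _; rewrite normrM ger0_norm ?dist_ge0 //.
rewrite (le_trans (ler_piMl _ (dist_le1 t x))) // (bigD1 y) //= lerDl.
exact: sumr_ge0.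
Qed.

(* The seed [0] truncates the minimum at [0]: harmless, as only the sign of
   [guarantee] matters, and it avoids assuming [SY] nonempty. *)
Definition guarantee (f : {ffun SX -> R}) : R := \big[Order.min/0]_y payoff f y.

Lemma guarantee_le_payoff f y : guarantee f <= payoff f y.
Proof. exact: bigmin_le. Qed.

Lemma guarantee_lt0_attained f :
  guarantee f < 0 -> exists y, payoff f y <= guarantee f.
Proof.
move=> g_lt0; apply/existsP; apply: contraTT (lexx (guarantee f)).
move=> /existsPn no_y; rewrite -ltNge; apply/bigmin_gtP; split => // y _.
by rewrite ltNge no_y.
Qed.

Lemma continuous_coord_sum (c : SX -> R) :
  continuous (fun v : 'rV[R]_#|SX| => \sum_x v ord0 (enum_rank x) * c x).
Proof.
move=> v; elim: (index_enum SX) => [|x s IH].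
  under eq_fun do rewrite big_nil.
  exact: cst_continuous.
under eq_fun do rewrite big_cons.
apply: continuousD IH.
apply: (continuousM (s := fun v : 'rV[R]_#|SX| => v ord0 (enum_rank x))
                    (t := fun=> c x)).
  exact: coord_continuous.
exact: cst_continuous.
Qed.

Lemma guarantee_attains_max : (0 < #|SX|)%N ->
  exists t : dist R SX, forall t' : dist R SX, guarantee (val t') <= guarantee (val t).
Proof.
move=> /card_gt0P[x0 _].
pose of_row (v : 'rV[R]_#|SX|) := [ffun x => v ord0 (enum_rank x)].
pose to_row (t : dist R SX) : 'rV[R]_#|SX| := \row_i val t (enum_val i).
pose simplex := [set v : 'rV[R]_#|SX| | forall i, `[0, 1]%classic (v ord0 i)] `&`
  ((fun v : 'rV[R]_#|SX| => \sum_x v ord0 (enum_rank x) * 1) @^-1` [set 1]).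
have of_to_row t : of_row (to_row t) = val t.
  by apply/ffunP => x; rewrite !ffunE mxE enum_rankK.
have to_row_simplex t : to_row t \in simplex.
  rewrite inE; split => [i|] /=; first by rewrite mxE in_itv /= dist_ge0 dist_le1.
  rewrite -[RHS](dist_sum1 t); apply: eq_bigr => x _.
  by rewrite mxE enum_rankK mulr1.
have simplex_dist v : v \in simplex -> is_dist (of_row v).
  rewrite inE => -[v01 v1]; apply/andP; split.
    by apply/forallP => x; rewrite ffunE; have /andP[] := v01 (enum_rank x).
  by apply/eqP; rewrite -[RHS]v1; apply: eq_bigr => x _; rewrite ffunE mulr1.
have simplex_compact : compact simplex.
  apply: compact_closedI; first exact: (rV_compact (fun=> @segment_compact R 0 1)).
  apply: preimage_closed; last exact: closed_eq.
  by move=> v _; exact: continuous_coord_sum.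
have guarantee_cont : continuous (guarantee \o of_row).
  apply: continuous_big => [|y _]; first exact: min_continuous.
  rewrite /payoff.
  under [X in continuous X]eq_fun => v do under eq_bigr do rewrite ffunE.
  exact: continuous_coord_sum.
have [v /simplex_dist v_dist v_max] := compact_EVT_max
  (ex_intro _ _ (set_mem (to_row_simplex (point_dist R x0)))) simplex_compact
  (continuous_subspaceT guarantee_cont).
exists (exist (fun f => is_dist f) _ v_dist) => t'; rewrite -of_to_row.
exact: v_max (to_row_simplex t').
Qed.

End Payoff.

Lemma sum_tupleS (V : nmodType) (T : finType) n (F : n.+1.-tuple T -> V) :
  \sum_(h : n.+1.-tuple T) F h = \sum_(x : T) \sum_(h : n.-tuple T) F [tuple of x :: h].
Proof.
rewrite pair_big /= (reindex (fun p : T * n.-tuple T => [tuple of p.1 :: p.2])) //=.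
exists (fun h : n.+1.-tuple T => (thead h, [tuple of behead h])).
  by move=> [x h] _ /=; rewrite theadE; congr pair; apply: val_inj.
by move=> h _; rewrite [RHS]tuple_eta.
Qed.

Section Play.
Variables (R : realType) (SX SY : finType).
Variables (sX : stratX R SX SY) (sY : stratY R SX SY).
Implicit Types (h : history SX SY) (f g V : history SX SY -> R).

Definition round_prob h (p : SX * SY) : R := val (sX h) p.1 * val (sY h) p.2.

Lemma round_prob_ge0 h p : 0 <= round_prob h p.
Proof. by rewrite mulr_ge0 ?dist_ge0. Qed.

Lemma sum_round_prob_snd h (F : SY -> R) :
  \sum_p round_prob h p * F p.2 = \sum_y val (sY h) y * F y.
Proof.
rewrite -(pair_big predT predT (fun x y => round_prob h (x, y) * F y)) /=.
rewrite exchange_big; apply: eq_bigr => y _.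
rewrite -[RHS]mul1r -(dist_sum1 (sX h)) !mulr_suml.
by apply: eq_bigr => x _; rewrite mulrA.
Qed.

Lemma sum_round_prob h : \sum_p round_prob h p = 1.
Proof.
under eq_bigr do rewrite -[round_prob _ _]mulr1.
rewrite (sum_round_prob_snd h (fun=> 1)).
by under eq_bigr do rewrite mulr1; rewrite dist_sum1.
Qed.

Fixpoint expect n g h : R :=
  if n is n'.+1 then \sum_p round_prob h p * expect n' g (rcons h p) else g h.

Lemma expect_cst n a h : expect n (fun=> a) h = a.
Proof.
elim: n h => [|n IH] h //=.
by under eq_bigr do rewrite IH; rewrite -mulr_suml sum_round_prob mul1r.
Qed.

Lemma ler_expect n f g h : (forall h, f h <= g h) -> expect n f h <= expect n g h.
Proof.
move=> fg; elim: n h => [|n IH] h //=.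
by apply: ler_sum => p _; rewrite ler_wpM2l ?round_prob_ge0.
Qed.

Lemma expect_in01 n V h : (forall h, 0 <= V h <= 1) -> 0 <= expect n V h <= 1.
Proof.
move=> V01; rewrite -(expect_cst n 0 h) -(expect_cst n 1 h).
by rewrite !ler_expect // => h'; case/andP: (V01 h').
Qed.

Lemma expectZB n k f g h :
  expect n (fun h => k * (f h - g h)) h = k * (expect n f h - expect n g h).
Proof.
elim: n h => [|n IH] h //=.
under eq_bigr do rewrite IH.
rewrite mulrBr !mulr_sumr -sumrB; apply: eq_bigr => p _; ring.
Qed.

Lemma expect_tower m n g h : expect m (expect n g) h = expect (m + n) g h.
Proof. by elim: m h => [|m IH] h //=; under eq_bigr do rewrite IH. Qed.

Variable phi : SX -> SY -> R.

Definition round_payoff h : R := \sum_p round_prob h p * phi p.1 p.2.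

Lemma round_payoffE h :
  round_payoff h = \sum_y val (sY h) y * payoff phi (val (sX h)) y.
Proof.
rewrite /round_payoff.
rewrite -(pair_big predT predT (fun x y => round_prob h (x, y) * phi x y)) /=.
rewrite exchange_big; apply: eq_bigr => y _.
by rewrite mulr_sumr; apply: eq_bigr => x _; rewrite /round_prob /=; ring.
Qed.

Lemma exp_payoffE t : exp_payoff phi sX sY t = expect t round_payoff [::].
Proof.
rewrite /exp_payoff /hist_prob; move: [::] => h.
elim: t h => [|t IH] h; rewrite sum_tupleS /= ?/round_payoff; apply: eq_bigr => p _.
  rewrite (eq_bigr (fun=> round_prob h p * phi p.1 p.2)) => [|h' _].
    by rewrite sumr_const card_tuple expn0.
  by rewrite tuple0 /= mulr1.
rewrite -IH mulr_sumr; apply: eq_bigr => h' _ /=.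
by rewrite mulrA !(tnth_nth p).
Qed.

Lemma sum_expect_potential k V :
  (forall h, round_payoff h = k * (V h - expect 1 V h)) ->
  forall n h, \sum_(t < n) expect t round_payoff h = k * (V h - expect n V h).
Proof.
move=> payoffE; elim=> [|n IH] h; first by rewrite big_ord0 /= subrr mulr0.
by rewrite big_ord_recr IH (funext payoffE) expectZB expect_tower addn1 /=; ring.
Qed.

End Play.

Lemma cesaro_bounded_cvg0 (R : realType) (u : nat -> R) K :
  (forall T, `|u T| <= K) -> (fun T : nat => (T.+1)%:R^-1 * u T) @ \oo --> 0.
Proof.
move=> uK; apply/cvgr0Pnorm_le => e e0.
have K1_gt0 : 0 < K + 1 by rewrite ltr_wpDl // (le_trans _ (uK 0%N)).
apply: filterS ((cvgr0Pnorm_le _).1 (@cvg_harmonic R) _ (divr_gt0 e0 K1_gt0)).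
move=> T /= harmonicT; rewrite normrM.
rewrite (le_trans (ler_pM _ _ harmonicT (uK T))) // mulrAC ler_pdivrMr //.
by rewrite ler_pM2l // lerDl.
Qed.

Lemma le_neg_not_cvg0 (R : realType) (u : nat -> R) c :
  0 < c -> (forall T, u T <= - c) -> ~ u @ \oo --> 0.
Proof.
move=> c0 uc u0; have [N _ uN] := (cvgr0Pnorm_lt u).1 u0 c c0.
have := uN N (leqnn N); rewrite /= ltNge => /negP; apply.
by rewrite ler_normr lerNr uc orbT.
Qed.

Section Autocratic.
Variables (R : realType) (SX SY : finType) (phi : SX -> SY -> R).
Variable sX : stratX R SX SY.

Lemma autocratic_opp : autocratic phi sX -> autocratic (fun x y => - phi x y) sX.
Proof.
have exp_payoffN sY t :
    exp_payoff (fun x y => - phi x y) sX sY t = - exp_payoff phi sX sY t.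
  by rewrite /exp_payoff -sumrN; apply: eq_bigr => h _; rewrite mulrN.
move=> sX_auto sY.
have -> : (fun T : nat =>
            T.+1%:R^-1 * \sum_(t < T.+1) exp_payoff (fun x y => - phi x y) sX sY t)
    = (fun T : nat => - (T.+1%:R^-1 * \sum_(t < T.+1) exp_payoff phi sX sY t)).
  by apply/funext => T; rewrite -mulrN -sumrN; under eq_bigr do rewrite exp_payoffN.
by apply: cvg_trans (cvgN (sX_auto sY)) _; rewrite oppr0.
Qed.

Lemma uniformly_negative_not_autocratic c : 0 < c ->
  (forall t : dist R SX, exists y, payoff phi (val t) y <= - c) -> ~ autocratic phi sX.
Proof.
move=> c0 neg sX_auto.
pose best_reply h := projT1 (cid (neg (sX h))).
pose sY : stratY R SX SY := fun h => point_dist R (best_reply h).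
have round_neg h : round_payoff sX sY phi h <= - c.
  rewrite round_payoffE (bigD1 (best_reply h)) //= big1 => [|y /negbTE yh]; last first.
    by rewrite ffunE yh mul0r.
  by rewrite ffunE eqxx mul1r addr0 (projT2 (cid (neg (sX h)))).
have exp_payoff_le t : exp_payoff phi sX sY t <= - c.
  by rewrite exp_payoffE -(expect_cst sX sY t (- c) [::]); exact: ler_expect.
apply: le_neg_not_cvg0 c0 _ (sX_auto sY) => T.
rewrite mulrC ler_pdivrMr ?ltr0n //.
rewrite (le_trans (ler_sum _ (fun (t : 'I_T.+1) _ => exp_payoff_le t))) //.
by rewrite sumr_const card_ord mulr_natr.
Qed.

Lemma autocratic_guarantee : (0 < #|SX|)%N -> autocratic phi sX ->
  exists t : dist R SX, forall y, 0 <= payoff phi (val t) y.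
Proof.
move=> /(guarantee_attains_max phi) [t t_max] sX_auto.
have [g_ge0 | g_lt0] := leP 0 (guarantee phi (val t)).
  by exists t => y; rewrite (le_trans g_ge0) // guarantee_le_payoff.
exfalso.
apply: (uniformly_negative_not_autocratic (c := - guarantee phi (val t))) sX_auto.
- by rewrite oppr_gt0 g_lt0.
- move=> t'; have [y le_y] := guarantee_lt0_attained (le_lt_trans (t_max t') g_lt0).
  by exists y; rewrite opprK (le_trans le_y).
Qed.

End Autocratic.

Section TwoPointLearner.
Variables (R : realType) (SX SY : finType) (phi : SX -> SY -> R).
Variables (tp tm : dist R SX).
Hypothesis tp_ge0 : forall y, 0 <= payoff phi (val tp) y.
Hypothesis tm_le0 : forall y, payoff phi (val tm) y <= 0.

Let M := payoff_bound phi.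

Definition next_weight (p : R) (y : SY) : R := p - payoff phi (mix p tp tm) y / M.

Lemma next_weight_in01 p y : 0 <= p <= 1 -> 0 <= next_weight p y <= 1.
Proof.
move=> /andP[p0 p1]; have M_gt0 : 0 < M := payoff_bound_gt0 phi.
have := norm_payoff_le phi tp y; rewrite ler_norml => /andP[_ tp_le].
have := norm_payoff_le phi tm y; rewrite ler_norml => /andP[tm_ge _].
have tp01 : 0 <= payoff phi (val tp) y / M <= 1.
  by rewrite ler_pdivrMr // mul1r tp_le andbT divr_ge0 // ltW.
have tm01 : -1 <= payoff phi (val tm) y / M <= 0.
  by rewrite ler_pdivlMr // mulN1r tm_ge mulr_le0_ge0 // invr_ge0 ltW.
rewrite /next_weight payoff_mix mulrDl -!mulrA.
case/andP: tp01; case/andP: tm01 => *; apply/andP; split; nra.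
Qed.

(* On [t = mix p tp tm] this is [mix (next_weight p y) tp tm]
   ([learner_updateE]); it is written without [p], which is not unique when
   [tp = tm], and falls back to [t] when the formula leaves the simplex. *)
Definition learner_update (t : dist R SX) (y : SY) : dist R SX :=
  insubd t [ffun x => val t x - payoff phi (val t) y / M * (val tp x - val tm x)].

Lemma learner_updateE (t : dist R SX) p y : 0 <= p <= 1 -> val t = mix p tp tm ->
  val (learner_update t y) = mix (next_weight p y) tp tm.
Proof.
move=> p01 tE; rewrite /learner_update.
have -> : [ffun x => val t x - payoff phi (val t) y / M * (val tp x - val tm x)]
    = mix (next_weight p y) tp tm.
  by apply/ffunP => x; rewrite tE !ffunE /next_weight; ring.
by rewrite insubdK //; apply: mix_is_dist; exact: next_weight_in01.
Qed.

Lemma mix0 : val tm = mix 0 tp tm.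
Proof. by apply/ffunP => x; rewrite ffunE mul0r add0r subr0 mul1r. Qed.

Lemma learner_two_point : two_point tm learner_update.
Proof.
exists tp, tm, 0, next_weight; split => //.
- by rewrite lexx ler01.
- exact: next_weight_in01.
- exact: mix0.
- by move=> p y t p01 tE; exact: learner_updateE.
Qed.

Definition weight (h : history SX SY) : R :=
  foldl (fun p xy => next_weight p xy.2) 0 h.

Lemma reactive_learnerE h :
  0 <= weight h <= 1 /\ val (reactive tm learner_update h) = mix (weight h) tp tm.
Proof.
elim/last_ind: h => [|h p [w01 hE]]; first by rewrite /weight lexx ler01 -mix0.
rewrite /weight /reactive !foldl_rcons -/(weight h) -/(reactive _ _ h).
by split; [exact: next_weight_in01 | exact: learner_updateE].
Qed.

Lemma learner_round_payoff (sY : stratY R SX SY) h :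
  round_payoff (reactive tm learner_update) sY phi h
  = M * (weight h - expect (reactive tm learner_update) sY 1 weight h).
Proof.
have [_ hE] := reactive_learnerE h.
rewrite round_payoffE hE /=.
under [in RHS]eq_bigr do rewrite /weight foldl_rcons -/(weight h) /next_weight.
rewrite (sum_round_prob_snd _ _ h
  (fun y => weight h - payoff phi (mix (weight h) tp tm) y / M)).
have M_neq0 : M != 0 by rewrite gt_eqF // payoff_bound_gt0.
rewrite -[X in M * (X - _)]mulr1 -(dist_sum1 (sY h)) mulr_sumr -sumrB mulr_sumr.
by apply: eq_bigr => y _; field.
Qed.

Lemma learner_autocratic : autocratic phi (reactive tm learner_update).
Proof.
move=> sY; apply: (cesaro_bounded_cvg0 (K := M)) => T.
under eq_bigr do rewrite exp_payoffE.
rewrite (sum_expect_potential (learner_round_payoff sY)).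
have /andP[e0 e1] :
    0 <= expect (reactive tm learner_update) sY T.+1 weight [::] <= 1.
  by apply: expect_in01 => h; case: (reactive_learnerE h).
have M_ge0 : 0 <= M := ltW (payoff_bound_gt0 phi).
rewrite normrM ger0_norm // ler_piMr // [weight [::]]/weight /= sub0r normrN.
by rewrite ger0_norm.
Qed.

End TwoPointLearner.

Unset Implicit Arguments.

Theorem theorem3 (R : realType) (SX SY : finType)
    (hX : (0 < #|SX|)%N) (hY : (0 < #|SY|)%N)
    (phi : SX -> SY -> R) (sX : stratX R SX SY) :
  autocratic phi sX ->
  exists (sigma0 : dist R SX) (sigmastar : dist R SX -> SY -> dist R SX),
    two_point sigma0 sigmastar /\ autocratic phi (reactive sigma0 sigmastar).
Proof.
move=> sX_auto.
have [tp tp_ge0] := autocratic_guarantee hX sX_auto.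
have [tm tm_ge0] := autocratic_guarantee hX (autocratic_opp sX_auto).
have tm_le0 y : payoff phi (val tm) y <= 0.
  by rewrite -oppr_ge0 -sumrN; under eq_bigr do rewrite -mulrN; exact: tm_ge0.
exists tm, (learner_update phi tp tm); split.
- exact: learner_two_point.
- exact: learner_autocratic.
Qed.
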